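(* Let $r_1,r_2$ be positive integers. Then $\psi_{d,\min}(M_{r_1,r_2}(K_2))=2$ if and only if $r_1\ge 2$ and $r_2\ge 2$. Moreover, if $r_1,r_2\ge 2$ then there is a homomorphism $M_{r_1,r_2}(K_2)\to S_4$, while for all positive integers $r$ and $m$ there is no homomorphism $M_{1,r}(K_2)\to S_m$ and no homomorphism $M_{r,1}(K_2)\to S_m$.
   Context: For a graph $G$ and positive integer $r$, the generalized Mycielskian $M_r(G)$ has vertex set $\{(v,i):v\in V(G),0\le i\le r-1\}\cup\{z\}$, with $(u,i)$ adjacent to $(v,j)$ iff $\{u,v\}\in E(G)$ and ($|i-j|=1$ or $i=j=0$), and $z$ adjacent to all $(v,r-1)$, $v\in V(G)$. $M_{r_1,r_2}(G)=M_{r_2}(M_{r_1}(G))$. For a digraph $D$, $N_+[v]=\{v\}\cup\{u:(v,u)\in E(D)\}$, $c(U)=\{c(u):u\in U\}$, and $\psi_d(D)=\min_c\max_v|c(N_+[v])|$ over proper colorings $c$ of the underlying graph; $\psi_{d,\min}(G)$ is the minimum of $\psi_d(\vec G)$ over all orientations $\vec G$ of $G$. The symmetric shift graph $S_m$ has vertex set $\{(i,j):1\le i,j\le m,\ i\ne j\}$, and $(i,j)$ is adjacent to $(k,\ell)$ iff $j=k$ or $i=\ell$. *)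

From mathcomp Require Import all_boot.
Set Implicit Arguments. Unset Strict Implicit. Unset Printing Implicit Defensive.

Definition graph_hom (V W : finType) (a : rel V) (b : rel W) (f : V -> W) : Prop :=
  forall x y, a x y -> b (f x) (f y).

Definition K2 : rel 'I_2 := fun x y => x != y.

(* Generalized Mycielskian M_r(G): vertices (v,i) with i < r, encoded as
   Some (v,i), and the apex z encoded as None. *)
Definition myc (V : finType) (adj : rel V) (r : nat) : rel (option (V * 'I_r)) :=
  fun x y =>
    match x, y with
    | Some (u, i), Some (v, j) =>
        adj u v && [|| (i.+1 == j :> nat), (j.+1 == i :> nat)
                     | ((i == 0 :> nat) && (j == 0 :> nat))]
    | None, Some (_, j) => (j == r.-1 :> nat)
    | Some (_, i), None => (i == r.-1 :> nat)
    | None, None => false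
    end.

Arguments myc : clear implicits.

(* M_{r1,r2}(K_2) = M_{r2}(M_{r1}(K_2)). *)
Definition M2K2 (r1 r2 : nat) :=
  myc (option ('I_2 * 'I_r1) : finType) (myc ('I_2 : finType) K2 r1) r2.
Arguments M2K2 : clear implicits.

(* Symmetric shift graph S_m: vertices (i,j), i <> j, in {0..m-1}
   (shifted from {1..m}); (i,j) ~ (k,l) iff j = k or i = l. *)
Definition shift_vert (m : nat) := {p : 'I_m * 'I_m | p.1 != p.2}.
Definition shift_adj (m : nat) : rel (shift_vert m) :=
  fun x y => ((val x).2 == (val y).1) || ((val x).1 == (val y).2).

Definition orientation (V : finType) (adj : rel V) (o : rel V) : Prop :=
  (forall x y, o x y -> adj x y) /\
  (forall x y, adj x y -> o x y || o y x) /\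
  (forall x y, ~~ (o x y && o y x)).

Definition proper_col (V : finType) (adj : rel V) (c : V -> nat) : Prop :=
  forall x y, adj x y -> c x != c y.

Definition out_closed (V : finType) (o : rel V) (v : V) : seq V :=
  [seq u <- enum V | (u == v) || o v u].

Definition ncol (V : finType) (o : rel V) (c : V -> nat) (v : V) : nat :=
  size (undup [seq c u | u <- out_closed o v]).

(* psi_{d,min}(G) = k, i.e. min over orientations o and proper colourings c
   of max_v |c(N_+[v])| equals k: some (o,c) achieves max <= k, and every
   (o,c) has max >= k. *)
Definition psi_dmin_is (V : finType) (adj : rel V) (k : nat) : Prop :=
  (exists o c, orientation adj o /\ proper_col adj c /\ forall v, ncol o c v <= k) /\
  (forall o c, orientation adj o -> proper_col adj c -> exists v, k <= ncol o c v).

From mathcomp Require Import all_boot zify.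
Set Implicit Arguments. Unset Strict Implicit. Unset Printing Implicit Defensive.

(* An orientation with a proper colouring achieving psi_d <= 2 is the same thing
   as a homomorphism to the symmetric shift graph S_oo on nat: send v to the pair
   (colour of v, common colour of its out-neighbours).  So psi_{d,min} = 2 for a
   graph with an edge iff it maps to some S_m.
   If G contains a triangle, every homomorphism M_r(G) -> S_oo sends all the level
   copies of the triangle to one triangle of S_oo, since in S_oo a vertex adjacent
   to two vertices of a triangle is the third one; the apex z is then adjacent to
   all three vertices of that triangle, hence equal to each of them.  This rules
   out M_{1,r}(K_2) = M_r(K_3).
   The neighbourhood of (p, q) in S_oo is bipartite (split by "first entry = q"),
   so the cone M_1(H) over H maps to S_oo only if H is bipartite; M_r(K_2) is an
   odd cycle, which rules out M_{r,1}(K_2).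
   For r1, r2 >= 2, folding the levels gives M_{r1,r2}(K_2) -> M_{2,2}(K_2), and
   the latter maps to S_4 by an explicit table. *)

Definition shift_rel (p q : nat * nat) := (p.2 == q.1) || (p.1 == q.2).

Definition shift_hom (V : finType) (a : rel V) (f : V -> nat * nat) :=
  (forall v, (f v).1 != (f v).2) /\ (forall x y, a x y -> shift_rel (f x) (f y)).

Definition psi_dmin_le (V : finType) (a : rel V) (k : nat) :=
  exists o c, orientation a o /\ proper_col a c /\ forall v, ncol o c v <= k.

Lemma shift_relC p q : shift_rel p q = shift_rel q p.
Proof. by rewrite /shift_rel orbC; congr orb; apply: eq_sym. Qed.

Lemma shift_rel_irr p : p.1 != p.2 -> ~~ shift_rel p p.
Proof. by case: p => a b; rewrite /shift_rel /= eq_sym orbb. Qed.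

Lemma shift_triangle_rigid (x y z w : nat * nat) :
  x.1 != x.2 -> y.1 != y.2 -> z.1 != z.2 -> w.1 != w.2 ->
  shift_rel y z -> shift_rel x y -> shift_rel x z ->
  shift_rel w y -> shift_rel w z -> w = x.
Proof.
case: x => x1 x2; case: y => y1 y2; case: z => z1 z2; case: w => w1 w2.
rewrite /shift_rel /= => *; suff [-> ->] : w1 = x1 /\ w2 = x2 by []; lia.
Qed.

Lemma shift_nbr_bipartite (x y w : nat * nat) :
  x.1 != x.2 -> y.1 != y.2 ->
  shift_rel x w -> shift_rel y w -> shift_rel x y -> (x.1 == w.2) != (y.1 == w.2).
Proof.
case: x => x1 x2; case: y => y1 y2; case: w => w1 w2; rewrite /shift_rel /=.
by case: (x1 =P w2); case: (y1 =P w2) => /= *; lia.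
Qed.

Lemma shift_hom_of_hom (V : finType) (a : rel V) m (f : V -> shift_vert m) :
  graph_hom a (@shift_adj m) f ->
  shift_hom a (fun v => (nat_of_ord (val (f v)).1, nat_of_ord (val (f v)).2)).
Proof. by move=> hf; split=> [v|x y /hf]; first exact: (valP (f v)). Qed.

Section OrientedColouring.

Variables (V : finType) (a : rel V).

Lemma mem_out_closed_col (o : rel V) (c : V -> nat) v u :
  (u == v) || o v u -> c u \in [seq c w | w <- out_closed o v].
Proof. by move=> h; apply: map_f; rewrite mem_filter h mem_enum. Qed.

Lemma leq_ncol (o : rel V) (c : V -> nat) v (s : seq nat) :
  uniq s -> {subset s <= [seq c w | w <- out_closed o v]} -> size s <= ncol o c v.
Proof. by move=> us hs; apply: uniq_leq_size => // x /hs; rewrite mem_undup. Qed.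

Lemma ncol_ge2_of_edge x y (axy : a x y) o c :
  orientation a o -> proper_col a c -> exists v, 2 <= ncol o c v.
Proof.
move=> [oa [ao _]] pc.
have ncol2 v u : o v u -> c v != c u -> 2 <= ncol o c v.
  move=> ovu ne; apply: (@leq_ncol _ _ _ [:: c v; c u]); first by rewrite /= inE ne.
  by move=> t; rewrite !inE => /orP[]/eqP->; apply: mem_out_closed_col; rewrite ?eqxx ?ovu ?orbT.
case/orP: (ao _ _ axy) => oxy; first by exists x; apply: (ncol2 _ _ oxy); apply: pc.
by exists y; apply: (ncol2 _ _ oxy); apply: pc; apply: oa.
Qed.

(* All out-neighbours of v share one colour: two distinct ones would give,
   with c v, three colours in N_+[v]. *)
Lemma shift_hom_of_psi_le2 : psi_dmin_le a 2 -> exists f, shift_hom a f.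
Proof.
move=> [o [c [[oa [ao _]] [pc hn]]]].
pose out_col v := if [pick u | o v u] is Some u then c u else (c v).+1.
have out_colE x y : o x y -> out_col x = c y.
  move=> oxy; rewrite /out_col; case: pickP => [u ou|]; last by move/(_ y); rewrite oxy.
  apply/eqP; apply/negPn/negP => ne.
  have := @leq_ncol o c x [:: c x; c u; c y].
  rewrite /= !inE negb_or (pc _ _ (oa _ _ ou)) (pc _ _ (oa _ _ oxy)) ne.
  have sub : {subset [:: c x; c u; c y] <= [seq c w | w <- out_closed o x]}.
    by move=> t; rewrite !inE => /or3P[]/eqP->;
      apply: mem_out_closed_col; rewrite ?eqxx ?ou ?oxy ?orbT.
  by move/(_ isT sub); have := hn x; lia.
exists (fun v => (c v, out_col v)); split=> [v /=|x y axy].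
  rewrite /out_col; case: pickP => [u ou|_]; last by lia.
  exact: pc (oa _ _ ou).
by rewrite /shift_rel /=; case/orP: (ao _ _ axy) => /out_colE ->; rewrite eqxx ?orbT.
Qed.

(* Orient x -> y when f x = (p, q) and f y = (q, _), breaking the ties of
   arcs (p, q) <-> (q, p) by enum_rank; colouring by first entries, every
   N_+[v] then uses only the two entries of f v. *)
Lemma psi_le2_of_shift_hom f :
  (forall x y, a x y -> a y x) -> shift_hom a f -> psi_dmin_le a 2.
Proof.
move=> asym [nl hf].
have rank_neq x y : a x y -> (enum_rank x : nat) != enum_rank y.
  move=> axy; apply/negP => /eqP/val_inj/enum_rank_inj exy; subst y.
  by move: (hf _ _ axy); apply/negP/shift_rel_irr/nl.
exists (fun x y => a x y && ((f x).2 == (f y).1) &&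
                   (((f y).2 != (f x).1) || (enum_rank x < enum_rank y))).
exists (fun v => (f v).1).
split; [split; [|split]|split].
- by move=> x y /andP[/andP[]].
- move=> x y axy; rewrite axy (asym _ _ axy) /=.
  move: (hf _ _ axy) (nl x) (nl y) (rank_neq _ _ axy); rewrite /shift_rel.
  by case: (f x) => x1 x2; case: (f y) => y1 y2 /=; lia.
- move=> x y; apply/negP; case/andP=> /andP[/andP[_ e1] e2] /andP[/andP[_ e3] e4].
  by move: e1 e2 e3 e4; case: (f x) => x1 x2; case: (f y) => y1 y2 /=; lia.
- move=> x y axy; move: (hf _ _ axy) (nl x) (nl y); rewrite /shift_rel.
  by case: (f x) => x1 x2; case: (f y) => y1 y2 /=; lia.
- move=> v; rewrite /ncol.
  apply: (@leq_trans (size [:: (f v).1; (f v).2])) => //.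
  apply: uniq_leq_size; first exact: undup_uniq.
  move=> t; rewrite mem_undup => /mapP[u]; rewrite mem_filter mem_enum andbT.
  case/orP=> [/eqP-> ->|/andP[/andP[_ /eqP <-] _] ->]; by rewrite !inE eqxx ?orbT.
Qed.

End OrientedColouring.

Section Mycielskian.

Variables (V : finType) (a : rel V).

Lemma myc_sym r : (forall x y, a x y -> a y x) ->
  forall x y, myc V a r x y -> myc V a r y x.
Proof. by move=> asym [[u i]|] [[v j]|] //= /andP[/asym -> H] /=; move: H; lia. Qed.

Lemma myc_base r u v (hr : 0 < r) :
  a u v -> myc V a r (Some (u, Ordinal hr)) (Some (v, Ordinal hr)).
Proof. by move=> h; rewrite /= h. Qed.

Lemma myc_step r u v k (hk : k.+1 < r) (hk' : k < r) :
  a u v -> myc V a r (Some (u, Ordinal hk)) (Some (v, Ordinal hk')).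
Proof. by move=> h /=; rewrite h eqxx orbT. Qed.

Lemma myc_apex r u (hr : r.-1 < r) : myc V a r None (Some (u, Ordinal hr)).
Proof. by rewrite /= eqxx. Qed.

Lemma myc_triangle_no_shift_hom r f x y z :
  (forall u v, a u v -> a v u) -> a x y -> a x z -> a y z -> 0 < r ->
  ~ shift_hom (myc V a r) f.
Proof.
move=> asym axy axz ayz hr [nl hf].
pose F k (hk : k < r) u := f (Some (u, Ordinal hk)).
have base u v : a u v -> shift_rel (F 0 hr u) (F 0 hr v) by move/(myc_base hr); apply: hf.
have [[AB AC] BC] := (base _ _ axy, base _ _ axz, base _ _ ayz).
have [[BA CA] CB] := (base _ _ (asym _ _ axy), base _ _ (asym _ _ axz), base _ _ (asym _ _ ayz)).
have rigid := shift_triangle_rigid (nl _) (nl _) (nl _) (nl _).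
have levels k (hk : k < r) :
    [/\ F k hk x = F 0 hr x, F k hk y = F 0 hr y & F k hk z = F 0 hr z].
  elim: k hk => [|k IH] hk; first by rewrite /F (_ : Ordinal hk = Ordinal hr) //; apply: val_inj.
  have hk' : k < r by apply: ltnW.
  have [ex ey ez] := IH hk'.
  have up u v : a u v -> shift_rel (F k.+1 hk u) (F k hk' v) by move/(myc_step hk hk'); apply: hf.
  have [xy xz] := (up _ _ axy, up _ _ axz).
  have [yx yz] := (up _ _ (asym _ _ axy), up _ _ ayz).
  have [zx zy] := (up _ _ (asym _ _ axz), up _ _ (asym _ _ ayz)).
  rewrite ex ey ez in xy xz yx yz zx zy.
  by split; [apply: rigid BC AB AC _ _ | apply: rigid AC BA BC _ _ | apply: rigid AB CA CB _ _].
have htop : r.-1 < r by lia.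
have [ex ey ez] := levels _ htop.
have apex u : shift_rel (f None) (F _ htop u) by apply: hf; apply: myc_apex.
have [[zx zy] zz] := (apex x, apex y, apex z); rewrite ex in zx; rewrite ey in zy; rewrite ez in zz.
move: zx; rewrite (rigid _ _ _ _ BC AB AC zy zz).
by apply/negP/shift_rel_irr/nl.
Qed.

Lemma cone_shift_hom_bipartite f :
  shift_hom (myc V a 1) f -> exists b : V -> bool, forall x y, a x y -> b x != b y.
Proof.
move=> [nl hf].
exists (fun x => (f (Some (x, ord0))).1 == (f None).2) => x y axy.
apply: shift_nbr_bipartite; rewrite ?nl //.
- by rewrite shift_relC; apply: hf.
- by rewrite shift_relC; apply: hf.
- by apply: hf; rewrite /= axy.
Qed.

(* Along the levels, (u, k) and (v, k) keep distinct colours: each of them has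
   the colour of its level-(k+1) copy, as both are adjacent to the other one. *)
Lemma myc_not_bipartite r u v (b : _ -> bool) :
  a u v -> a v u -> 0 < r -> ~ (forall x y, myc V a r x y -> b x != b y).
Proof.
move=> auv avu hr hb.
have levels k (hk : k < r) : b (Some (u, Ordinal hk)) != b (Some (v, Ordinal hk)).
  elim: k hk => [|k IH] hk; first by apply: hb; apply: myc_base.
  have hk' : k < r by apply: ltnW.
  move: (IH hk') (hb _ _ (myc_step hk hk' auv)) (hb _ _ (myc_step hk hk' avu)).
  by case: (b _); case: (b _); case: (b _); case: (b _).
have htop : r.-1 < r by lia.
move: (levels _ htop) (hb _ _ (myc_apex u htop)) (hb _ _ (myc_apex v htop)).
by case: (b _); case: (b _); case: (b _).
Qed.

End Mycielskian.

(* Truncated subtraction sends every level below r - 1 to level 0 of M_2,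
   where the copy of G has all edges of G, and level r - 1 to the top level. *)
Definition fold_level r (i : 'I_r) : 'I_2 := inord (i - (r - 2)).

Lemma fold_levelE r (i : 'I_r) : 2 <= r -> (fold_level i : nat) = i - (r - 2).
Proof. by move=> hr; rewrite /fold_level inordK //; have := ltn_ord i; lia. Qed.

Definition myc_fold (V W : finType) (phi : V -> W) r (x : option (V * 'I_r)) :=
  if x is Some (u, i) then Some (phi u, fold_level i) else None.

Lemma myc_fold_hom (V W : finType) (a : rel V) (b : rel W) phi r :
  2 <= r -> graph_hom a b phi -> graph_hom (myc V a r) (myc W b 2) (@myc_fold V W phi r).
Proof.
move=> hr hphi [[u i]|] [[v j]|] //=; rewrite ?fold_levelE //.
- by case/andP=> /hphi -> /= H; move: H (ltn_ord i) (ltn_ord j); lia.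
- by move: (ltn_ord i); lia.
- by move: (ltn_ord j); lia.
Qed.

Notation sv i j := (@exist _ (fun p : 'I_4 * 'I_4 => p.1 != p.2)
                       (@Ordinal 4 i isT, @Ordinal 4 j isT) isT).

(* The image of a vertex of M_{2,2}(K_2) is the entry of [S4_table] at index
   0 for the outer apex, 1 + i for the inner apex at outer level i, and
   3 + u + 2 j + 4 i for the vertex (u, j) of M_2(K_2) at outer level i. *)
Definition S4_table : seq (shift_vert 4) :=
  [:: sv 0 1; sv 0 2; sv 1 2; sv 0 3; sv 3 1; sv 2 3; sv 2 0; sv 1 2; sv 3 0; sv 1 0; sv 1 0].

Definition M22_index (x : option (option ('I_2 * 'I_2) * 'I_2)) : nat :=
  match x with
  | None => 0
  | Some (None, i) => 1 + i
  | Some (Some (u, j), i) => 3 + u + 2 * j + 4 * i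
  end.

Definition M22_to_S4 x : shift_vert 4 := nth (sv 0 1) S4_table (M22_index x).

Lemma ord2_ind (P : 'I_2 -> Prop) : P ord0 -> P (@Ordinal 2 1 isT) -> forall i, P i.
Proof.
move=> P0 P1 [[|[|k]] hk] //.
- by rewrite (_ : Ordinal hk = ord0) //; apply: val_inj.
- by rewrite (_ : Ordinal hk = Ordinal (isT : 1 < 2)) //; apply: val_inj.
Qed.

Lemma M22_vert_ind (P : option (option ('I_2 * 'I_2) * 'I_2) -> Prop) :
  P None -> (forall i, P (Some (None, i))) -> (forall u j i, P (Some (Some (u, j), i))) ->
  forall x, P x.
Proof. by move=> P0 P1 P2 [[[[u j]|] i]|]. Qed.

Lemma M22_to_S4_hom : graph_hom (M2K2 2 2) (@shift_adj 4) M22_to_S4.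
Proof.
move=> x y.
elim/M22_vert_ind: x; [| elim/ord2_ind | do 3 elim/ord2_ind];
(elim/M22_vert_ind: y; [| elim/ord2_ind | do 3 elim/ord2_ind]); by [].
Qed.

Lemma M2K2_hom_S4 r1 r2 : 2 <= r1 -> 2 <= r2 ->
  exists f, graph_hom (M2K2 r1 r2) (@shift_adj 4) f.
Proof.
move=> h1 h2; exists (fun x => M22_to_S4 (myc_fold (@myc_fold 'I_2 'I_2 id r1) x)).
move=> x y /(myc_fold_hom h2 (myc_fold_hom h1 (fun u v (e : K2 u v) => e))).
exact: M22_to_S4_hom.
Qed.

Lemma K2_sym (x y : 'I_2) : K2 x y -> K2 y x.
Proof. by rewrite /K2 eq_sym. Qed.

Lemma M2K2_1r_no_shift_hom r f : 0 < r -> ~ shift_hom (M2K2 1 r) f.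
Proof.
apply: (@myc_triangle_no_shift_hom _ _ _ _ None (Some (ord0, ord0))
          (Some (Ordinal (isT : 1 < 2), ord0))) => //.
exact: myc_sym K2_sym.
Qed.

Lemma M2K2_r1_no_shift_hom r f : 0 < r -> ~ shift_hom (M2K2 r 1) f.
Proof.
move=> hr /cone_shift_hom_bipartite [b hb].
exact: (@myc_not_bipartite _ _ _ ord0 (Ordinal (isT : 1 < 2)) b _ _ hr hb).
Qed.

Theorem mainTheorem7 (r1 r2 : nat) (hr1 : 0 < r1) (hr2 : 0 < r2) :
  (psi_dmin_is (M2K2 r1 r2) 2 <-> (2 <= r1 /\ 2 <= r2)) /\
  (2 <= r1 -> 2 <= r2 ->
     exists f, graph_hom (M2K2 r1 r2) (@shift_adj 4) f) /\
  (forall r m : nat, 0 < r -> 0 < m ->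
     (~ exists f, graph_hom (M2K2 1 r) (@shift_adj m) f) /\
     (~ exists f, graph_hom (M2K2 r 1) (@shift_adj m) f)).
Proof.
split; last split; last first.
- by move=> r m hr _; split=> -[f /shift_hom_of_hom];
    [apply: M2K2_1r_no_shift_hom | apply: M2K2_r1_no_shift_hom].
- exact: M2K2_hom_S4.
split=> [[/shift_hom_of_psi_le2 [f hf] _] | [h1 h2]].
  split; rewrite leqNgt; apply/negP => hlt.
    have r1E : r1 = 1 by lia.
    by subst r1; apply: M2K2_1r_no_shift_hom hf.
  have r2E : r2 = 1 by lia.
  by subst r2; apply: M2K2_r1_no_shift_hom hf.
have [g /shift_hom_of_hom hg] := M2K2_hom_S4 h1 h2.
split; first by apply: psi_le2_of_shift_hom hg; do 2 apply: myc_sym; exact: K2_sym.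
have htop : r2.-1 < r2 by lia.
exact: (ncol_ge2_of_edge (myc_apex _ None htop)).
Qed.
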